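(* Let $\Lambda\subset(0,\infty)$ with $D_{BM}(\Lambda)=+\infty$. Then there exists an increasing function $\Psi$ on $(0,\infty)$ with $\Psi(s)\nearrow+\infty$ as $s\to\infty$ which admits a family of intervals substantial for $\Psi$.
   Context: For an interval $I$, $n_\Lambda(I)$ denotes the number of points of $\Lambda$ in $I$. For $D>0$, a family of disjoint intervals $I_k=(a_k,b_k)$ with $0<a_1<b_1<a_2<b_2<\cdots$, $a_k\nearrow+\infty$, is called substantial for $D$ if $\frac{n_\Lambda(a_k,b_k)}{b_k-a_k}>D$ for all $k$ and $\sum_k\left(\frac{b_k-a_k}{b_k}\right)^2=+\infty$. The Beurling–Malliavin density of $\Lambda\subset(0,\infty)$ is $D_{BM}(\Lambda)=\sup\{D>0:\text{there exists a family substantial for } D\}$ (and $0$ if no such $D$ exists). For an increasing function $\Psi$ on $(0,\infty)$, a family of disjoint intervals $I_k=(a_k,b_k)\subset(0,\infty)$ is called substantial for $\Psi$ if $\frac{n_\Lambda(a_k,b_k)}{b_k-a_k}>\Psi(b_k-a_k)$ for all $k$ and $\sum_k\left(\frac{b_k-a_k}{b_k}\right)^2=+\infty$. *)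

From HB Require Import structures.
From mathcomp Require Import all_boot all_order all_algebra.
From mathcomp Require Import all_classical all_reals all_analysis.
From mathcomp Require Import finmap.
Set Implicit Arguments. Unset Strict Implicit. Unset Printing Implicit Defensive.
Import Order.TTheory GRing.Theory Num.Theory.
Import numFieldNormedType.Exports.
Local Open Scope classical_set_scope.
Local Open Scope ring_scope.

Definition n_count (R : realType) (Lam : set R) (a b : R) : \bar R :=
  if pselect (finite_set (Lam `&` `]a, b[)) is left _ then
    ((#|` fset_set (Lam `&` `]a, b[)|)%fset%:R)%:E
  else +oo%E.

Definition dens (R : realType) (Lam : set R) (a b : R) : \bar R :=
  (n_count Lam a b * ((b - a)^-1)%:E)%E.

Definition sq_sum_diverges (R : realType) (a b : nat -> R) : Prop :=
  (\sum_(0 <= k <oo) ((((b k - a k) / b k) ^+ 2)%:E) = +oo)%E.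

Definition substantial_D (R : realType) (Lam : set R) (D : R)
    (a b : nat -> R) : Prop :=
  [/\ 0 < a 0%N,
      (forall k, a k < b k /\ b k < a k.+1),
      (a k @[k --> \oo] --> +oo),
      (forall k, (D%:E < dens Lam (a k) (b k))%E) &
      sq_sum_diverges a b].

Definition D_BM (R : realType) (Lam : set R) : \bar R :=
  let S := [set D : R | 0 < D /\ exists a b, substantial_D Lam D a b] in
  if pselect (S !=set0) is left _ then ereal_sup [set D%:E | D in S]
  else 0%E.

Definition substantial_Psi (R : realType) (Lam : set R) (Psi : R -> R)
    (a b : nat -> R) : Prop :=
  [/\ (forall k, 0 <= a k /\ a k < b k),
      (forall i j, i <> j -> `]a i, b i[ `&` `]a j, b j[ = set0),
      (forall k, ((Psi (b k - a k))%:E < dens Lam (a k) (b k))%E) &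
      sq_sum_diverges a b].

From HB Require Import structures.
From mathcomp Require Import all_boot all_order all_algebra.
From mathcomp Require Import all_classical all_reals all_analysis.
From mathcomp Require Import lra.
Import Order.TTheory GRing.Theory Num.Theory.
Import numFieldNormedType.Exports.
Local Open Scope classical_set_scope.
Local Open Scope ring_scope.

(* Since D_BM(Lam) = +oo, for every n there is a family substantial for the
   density n + 1. Glue these families: take intervals of family n, beyond
   everything chosen so far, until they contribute at least 1 to the sum
   of ((b - a) / b)^2, then pass to family n + 1. The glued intervals are
   disjoint, their square sum diverges, and each family contributes finitely
   many of them, so the family index N k of the k-th interval is
   nondecreasing and unbounded. It remains to find a strictly increasing
   Psi tending to +oo with Psi (b k - a k) < N k + 1; since the intervals of
   the families up to n have bounded lengths, Psi s := s / (1 + s) + N (the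
   number of intervals ending before s) works. *)

Lemma nneseries_pinfty_tail (R : realType) (f : nat -> R) m C :
  (forall t, 0 <= f t) -> (\sum_(0 <= t <oo) (f t)%:E = +oo)%E ->
  exists i, C <= \sum_(m <= t < m + i) f t.
Proof.
move=> f0 fy; apply/not_existsP => small.
have tail : (\sum_(m <= t <oo) (f t)%:E = +oo)%E.
  move: fy; rewrite (nneseries_split 0 m) ?add0n;
    last by move=> *; rewrite lee_fin.
  by rewrite sumEFin; case: (\sum_(m <= t <oo) _)%E.
suff : (\sum_(m <= t <oo) (f t)%:E <= C%:E)%E by rewrite tail.
apply: lime_le; first by apply: is_cvg_ereal_nneg_natsum => *; rewrite lee_fin.
near=> n; have /subnKC <- : (m <= n)%N by near: n; exists m.
by rewrite sumEFin lee_fin ltW // ltNge; apply/negP/small.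
Unshelve. all: by end_near.
Qed.

Lemma nneseries_unbounded_pinfty (R : realType) (f : nat -> R) :
  (forall t, 0 <= f t) -> (forall C, exists n, C <= \sum_(0 <= t < n) f t) ->
  (\sum_(0 <= t <oo) (f t)%:E = +oo)%E.
Proof.
move=> f0 unb; apply: eq_infty => C; have [n Cn] := unb C.
apply: le_trans (nneseries_lim_ge n _); first by rewrite sumEFin lee_fin.
by move=> *; rewrite lee_fin.
Qed.

Section Chain.
Variable R : realType.
Variables a b : nat -> R.
Hypothesis ab : forall k, a k <= b k.
Hypothesis ba : forall k, b k <= a k.+1.

Lemma chain_le i j : (i < j)%N -> b i <= a j.
Proof.
elim: j => // j IH; rewrite ltnS leq_eqVlt => /orP[/eqP -> //|/IH].
by move/le_trans; apply; apply: le_trans (ab j) (ba j).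
Qed.

Lemma chain_disjoint i j : i <> j -> `]a i, b i[ `&` `]a j, b j[ = set0.
Proof.
suff lt i' j' : (i' < j')%N -> `]a i', b i'[ `&` `]a j', b j'[ = set0.
  by move/eqP; rewrite neq_ltn => /orP[/lt //|/lt]; rewrite setIC.
move=> ij; apply/seteqP; split => // x [] /=; rewrite !in_itv /=.
by move=> /andP[_ xb] /andP[ax _]; have := chain_le _ _ ij; lra.
Qed.

End Chain.

Lemma substantial_D_le (R : realType) (Lam : set R) (D D' : R) a b :
  D <= D' -> substantial_D Lam D' a b -> substantial_D Lam D a b.
Proof.
move=> DD' [a0 ab ainf dens div]; split => // k.
by apply: le_lt_trans (dens k); rewrite lee_fin.
Qed.

Lemma D_BM_pinfty_substantial (R : realType) (Lam : set R) :
  D_BM Lam = +oo%E -> forall D : R, exists a b, substantial_D Lam D a b.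
Proof.
rewrite /D_BM; case: pselect => [_ sup D|_ //].
have : (D%:E < +oo)%E by rewrite ltry.
rewrite -sup => /ereal_sup_gt[_ [D' [_ [a [b sub]]] <-]].
rewrite lte_fin => DD'.
by exists a, b; apply: substantial_D_le sub; apply: ltW.
Qed.

Lemma ltr_frac1D (R : realFieldType) (x y : R) :
  0 < x -> x < y -> x / (1 + x) < y / (1 + y).
Proof.
move=> x0 xy; rewrite ltr_pdivrMr; last lra.
rewrite mulrAC ltr_pdivlMr; last lra.
nra.
Qed.

Section Majorant.
Variable R : realType.
Variables (len b : nat -> R) (N : nat -> nat).
Hypothesis len_gt0 : forall k, 0 < len k.
Hypothesis len_le : forall k, len k <= b k.
Hypothesis b_nondecr : {homo b : i j / (i <= j)%N >-> i <= j}.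
Hypothesis N_nondecr : {homo N : i j / (i <= j)%N}.
Hypothesis N_unbounded : forall n, exists k, (n <= N k)%N.

(* One more than the last index [m] with [b m < s]; looking only at [m < s]
   keeps the maximum finite without knowing that [b] is unbounded. *)
Definition count_below (s : R) : nat :=
  \max_(m <- index_iota 0 (Num.truncn s) | b m < s) m.+1.

Definition majorant (s : R) : R := s / (1 + s) + (N (count_below s))%:R.

Lemma count_below_le s t : s <= t -> (count_below s <= count_below t)%N.
Proof.
move=> st; apply/bigmax_leqP_seq => m.
rewrite !mem_index_iota => /andP[_ ms] bms.
apply: leq_bigmax_seq; last exact: lt_le_trans st.
by rewrite mem_index_iota (leq_trans ms) // le_truncn.
Qed.

Lemma count_below_len k : (count_below (len k) <= k)%N.
Proof.
apply/bigmax_leqP_seq => m _ bm; rewrite ltnNge; apply/negP => km.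
by have := b_nondecr _ _ km; have := len_le k; lra.
Qed.

Lemma count_below_large K s :
  Num.max K.+1%:R (b K) < s -> (K < count_below s)%N.
Proof.
rewrite gt_max => /andP[Ks bKs]; apply: leq_bigmax_seq => //.
by rewrite mem_index_iota truncn_gt_nat ltW.
Qed.

Lemma majorant_lt s t : 0 < s -> s < t -> majorant s < majorant t.
Proof.
move=> s0 st; rewrite /majorant ltr_leD ?ltr_frac1D // ler_nat.
by apply/N_nondecr/count_below_le/ltW.
Qed.

Lemma majorant_cvg : majorant x @[x --> +oo] --> +oo.
Proof.
apply/cvgryPge => M; have [k Mk] := N_unbounded (Num.truncn M).+1.
near=> s; rewrite /majorant.
have s0 : 0 < s by near: s; apply: nbhs_pinfty_gt; rewrite num_real.
have kcs : (k < count_below s)%N.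
  by apply: count_below_large; near: s; apply: nbhs_pinfty_gt; rewrite num_real.
have : ((Num.truncn M).+1%:R <= (N (count_below s))%:R :> R).
  by rewrite ler_nat (leq_trans Mk) // N_nondecr // ltnW.
have := truncnS_gt M; have : 0 <= s / (1 + s) by rewrite divr_ge0 //; lra.
lra.
Unshelve. all: by end_near.
Qed.

Lemma majorant_len k : majorant (len k) < (N k).+1%:R.
Proof.
have lk := len_gt0 k; rewrite /majorant -natr1.
have : (N (count_below (len k)))%:R <= (N k)%:R :> R.
  by rewrite ler_nat N_nondecr // count_below_len.
have : len k / (1 + len k) < 1 by rewrite ltr_pdivrMr; lra.
lra.
Qed.

Lemma exists_majorant : exists Psi : R -> R,
  [/\ forall s t, 0 < s -> s < t -> Psi s < Psi t,
      Psi x @[x --> +oo] --> +oo &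
      forall k, Psi (len k) < (N k).+1%:R].
Proof.
by exists majorant; split;
  [exact: majorant_lt | exact: majorant_cvg | exact: majorant_len].
Qed.

End Majorant.

Definition sq_ratio {R : realType} (a b : nat -> R) (k : nat) : R :=
  ((b k - a k) / b k) ^+ 2.

Lemma sq_ratio_ge0 {R : realType} (a b : nat -> R) k : 0 <= sq_ratio a b k.
Proof. exact: sqr_ge0. Qed.

Section Gluing.
Variable R : realType.
Variables A B : nat -> nat -> R.
Hypothesis A0_gt0 : forall n, 0 < A n 0.
Hypothesis AB_chain : forall n j, A n j < B n j /\ B n j < A n j.+1.
Hypothesis A_cvg : forall n, A n j @[j --> \oo] --> +oo.
Hypothesis AB_div : forall n, sq_sum_diverges (A n) (B n).

Lemma exists_beyond n (P : R) : exists j, P < A n j.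
Proof.
by have /cvgryPgt/(_ P)[j _ Pj] := A_cvg n; exists j; apply: Pj => /=.
Qed.

Definition beyond n P := xchoose (exists_beyond n P).

Lemma beyondP n P : P < A n (beyond n P).
Proof. exact: (xchooseP (exists_beyond n P)). Qed.

(* A state [(n, j, acc)] means: the current interval is [(A n j, B n j)] and
   [acc] is the square sum collected so far from family [n]. *)
Definition glue_step (s : nat * nat * R) : nat * nat * R :=
  let: (n, j, acc) := s in
  if 1 <= acc then
    let j' := beyond n.+1 (B n j) in (n.+1, j', sq_ratio (A n.+1) (B n.+1) j')
  else (n, j.+1, acc + sq_ratio (A n) (B n) j.+1).

Definition glue_state k := iter k glue_step (0%N, 0%N, sq_ratio (A 0) (B 0) 0).
Definition glue_fam k := (glue_state k).1.1.
Definition glue_idx k := (glue_state k).1.2.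
Definition glue_acc k := (glue_state k).2.
Definition glue_a k := A (glue_fam k) (glue_idx k).
Definition glue_b k := B (glue_fam k) (glue_idx k).

Variant glue_step_spec k : Prop :=
  | GlueNext of 1 <= glue_acc k
      & glue_fam k.+1 = (glue_fam k).+1
      & glue_idx k.+1 = beyond (glue_fam k).+1 (glue_b k)
      & glue_acc k.+1 = sq_ratio glue_a glue_b k.+1
  | GlueStay of glue_acc k < 1
      & glue_fam k.+1 = glue_fam k
      & glue_idx k.+1 = (glue_idx k).+1
      & glue_acc k.+1 = glue_acc k + sq_ratio glue_a glue_b k.+1.

Lemma glue_stepP k : glue_step_spec k.
Proof.
case: (lerP 1 (glue_acc k)) => h; [apply: GlueNext | apply: GlueStay] => //;
  move: h; rewrite /sq_ratio /glue_a /glue_b /glue_acc /glue_fam /glue_idx;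
  rewrite /glue_state iterS;
  case: (iter k _ _) => [[n j] c] /= h; by rewrite ?h // leNgt h.
Qed.

Lemma glue_acc_ge0 k : 0 <= glue_acc k.
Proof.
elim: k => [|k IH]; first exact: sq_ratio_ge0.
by case: (glue_stepP k) => _ _ _ ->; rewrite ?addr_ge0 ?sq_ratio_ge0.
Qed.

Lemma glue_chain k : glue_a k < glue_b k /\ glue_b k < glue_a k.+1.
Proof.
split; first exact: (AB_chain _ _).1.
rewrite /glue_a; case: (glue_stepP k) => _ -> -> _; first exact: beyondP.
exact: (AB_chain _ _).2.
Qed.

Lemma glue_a_gt0 k : 0 < glue_a k.
Proof.
elim: k => [|k IH]; first exact: A0_gt0.
by have [h1 h2] := glue_chain k; lra.
Qed.

Lemma glue_fam_nondecr : {homo glue_fam : i j / (i <= j)%N}.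
Proof.
by apply: Order.NatMonotonyTheory.nondecnP => k; case: (glue_stepP k) => _ ->.
Qed.

Lemma glue_fam_sum k :
  (glue_fam k)%:R + glue_acc k <= \sum_(0 <= i < k.+1) sq_ratio glue_a glue_b i.
Proof.
elim: k => [|k IH]; first by rewrite big_nat1 add0r.
rewrite big_nat_recr //=; case: (glue_stepP k) => [h -> _ ->|_ -> _ ->].
  by rewrite -natr1; lra.
lra.
Qed.

Lemma glue_fam_next k : 1 <= glue_acc k -> glue_fam k.+1 = (glue_fam k).+1.
Proof. by case: (glue_stepP k) => [_ -> //|h]; rewrite leNgt h. Qed.

Lemma glue_fam_leaves k : exists k', (glue_fam k < glue_fam k')%N.
Proof.
apply/not_existsP => stuck; set n := glue_fam k; set j := glue_idx k.
have stay i : [/\ glue_fam (k + i) = n, glue_idx (k + i) = (j + i)%N &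
    glue_acc (k + i) =
      glue_acc k + \sum_(j.+1 <= t < j.+1 + i) sq_ratio (A n) (B n) t].
  elim: i => [|i [Fi Ii Ai]]; first by rewrite !addn0 big_geq ?addr0.
  rewrite !addnS; case: (glue_stepP (k + i)) => [_ Fi' _ _|_ Fs Is ->].
    by case: (stuck (k + i).+1); rewrite Fi' Fi.
  have -> : sq_ratio glue_a glue_b (k + i).+1 = sq_ratio (A n) (B n) (j.+1 + i).
    by rewrite /sq_ratio /glue_a /glue_b Fs Is Fi Ii addSn.
  by rewrite Fs Is Fi Ii Ai (big_nat_recr (j.+1 + i)) ?leq_addr //= addrA.
have [i big] :=
  @nneseries_pinfty_tail _ _ j.+1 1 (sq_ratio_ge0 (A n) (B n)) (AB_div n).
case: (stuck (k + i).+1); rewrite glue_fam_next; first by case: (stay i) => ->.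
by case: (stay i) => _ _ ->; have := glue_acc_ge0 k; lra.
Qed.

Lemma glue_fam_unbounded n : exists k, (n <= glue_fam k)%N.
Proof.
elim: n => [|n [k nk]]; first by exists 0%N.
by have [k' kk'] := glue_fam_leaves k; exists k'; apply: leq_ltn_trans kk'.
Qed.

Lemma glue_div : sq_sum_diverges glue_a glue_b.
Proof.
apply: (@nneseries_unbounded_pinfty _ _ (sq_ratio_ge0 glue_a glue_b)) => C.
have [k Ck] := glue_fam_unbounded (Num.truncn C).+1; exists k.+1.
apply: le_trans (glue_fam_sum k); have := glue_acc_ge0 k; have := truncnS_gt C.
by rewrite -(ler_nat R) in Ck; lra.
Qed.

Lemma glue_families : exists N J : nat -> nat,
  [/\ forall k, 0 < A (N k) (J k),
      forall k, A (N k) (J k) < B (N k) (J k) /\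
                B (N k) (J k) < A (N k.+1) (J k.+1),
      {homo N : i j / (i <= j)%N},
      forall n, exists k, (n <= N k)%N &
      sq_sum_diverges (fun k => A (N k) (J k)) (fun k => B (N k) (J k))].
Proof.
by exists glue_fam, glue_idx; split;
  [exact: glue_a_gt0 | exact: glue_chain | exact: glue_fam_nondecr
  | exact: glue_fam_unbounded | exact: glue_div].
Qed.

End Gluing.

Theorem lemma3p2 (R : realType) (Lam : set R) :
  Lam `<=` `]0, +oo[ ->
  D_BM Lam = +oo%E ->
  exists Psi : R -> R,
    (forall s t : R, 0 < s -> s < t -> Psi s < Psi t) /\
    (Psi x @[x --> +oo] --> +oo) /\
    exists a b : nat -> R, substantial_Psi Lam Psi a b.
Proof.
move=> _ /D_BM_pinfty_substantial substantial.
have /choice[AB famP] : forall n : nat, exists AB : (nat -> R) * (nat -> R),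
    substantial_D Lam n.+1%:R AB.1 AB.2.
  by move=> n; have [a [b sub]] := substantial n.+1%:R; exists (a, b).
have /all_and5[A0_gt0 AB_chain A_cvg _ AB_div] := famP.
have [N [J [a_gt0 ab_chain N_nondecr N_unbounded div]]] :=
  @glue_families _ _ _ A0_gt0 AB_chain A_cvg AB_div.
pose a k := (AB (N k)).1 (J k); pose b k := (AB (N k)).2 (J k).
have ab k : a k <= b k by exact/ltW/(ab_chain k).1.
have ba k : b k <= a k.+1 by exact/ltW/(ab_chain k).2.
have b_nondecr : {homo b : i j / (i <= j)%N >-> i <= j}.
  apply: Order.NatMonotonyTheory.nondecnP => k.
  exact: le_trans (ba k) (ab k.+1).
have len_gt0 k : 0 < b k - a k by rewrite subr_gt0; exact: (ab_chain k).1.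
have len_le k : b k - a k <= b k by rewrite gerBl; exact/ltW/a_gt0.
have [Psi [Psi_lt Psi_cvg Psi_len]] :=
  @exists_majorant R _ _ N len_gt0 len_le b_nondecr N_nondecr N_unbounded.
exists Psi; split => //; split => //; exists a, b; split => //.
- by move=> k; split; [exact/ltW/a_gt0 | exact: (ab_chain k).1].
- exact: chain_disjoint.
- move=> k; have [_ _ _ dens _] := famP (N k).
  by apply: lt_trans (dens (J k)); rewrite lte_fin Psi_len.
Qed.
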